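(* Let $(X,\rho)$ be a complete, unbounded hyperbolic metric space (with coherent system of geodesics $\Gamma$) and let $\omega:[0,+\infty)\to[0,+\infty)$ be a continuous, concave, nonzero and nondecreasing function with $\omega(0)=0$. Endow $\mathcal{C}_\omega(X)$ with the topology of uniform convergence on bounded sets. Then there is a meagre set $\mathcal{M}\subset\mathcal{C}_\omega(X)$ such that $\omega_f=\omega$ for every $f\in\mathcal{C}_\omega(X)\setminus\mathcal{M}$.
   Context: A metric space $(X,\rho)$ is geodesic-type with a coherent system of geodesics $\Gamma$ if $\Gamma$ is a family of isometries $\gamma:[0,\rho(x,y)]\to X$ with $\gamma(0)=x$, $\gamma(\rho(x,y))=y$ such that: (1) for all $x,y\in X$ there is a unique $\gamma\in\Gamma$ from $x$ to $y$; (2) if $\gamma\in\Gamma$ goes from $x$ to $y$, then $t\mapsto\gamma(\rho(x,y)-t)$ is the element of $\Gamma$ from $y$ to $x$; (3) if $\gamma\in\Gamma$ goes from $x$ to $y$ and $0\le t_1\le t_2\le\rho(x,y)$, then $t\mapsto\gamma(t+t_1)$, $t\in[0,t_2-t_1]$, is the element of $\Gamma$ from $\gamma(t_1)$ to $\gamma(t_2)$. For $x,y\in X$, $t\in[0,1]$ write $(1-t)x\oplus ty=\gamma(t\rho(x,y))$ where $\gamma\in\Gamma$ is the geodesic from $x$ to $y$. The space is hyperbolic if $\rho((1-t)x\oplus ty,(1-t)x\oplus tz)\le t\rho(y,z)$ for all $x,y,z\in X$, $t\in[0,1]$. For a map $f:X\to X$, its modulus of continuity is $\omega_f(s)=\sup\{\rho(f(x),f(y)):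 x,y\in X,\ \rho(x,y)\le s\}$ for $s\ge0$. $\mathcal{C}_\omega(X)$ is the set of all maps $f:X\to X$ with $\omega_f\le\omega$ pointwise. The topology of uniform convergence on bounded sets on $\mathcal{C}_\omega(X)$ is given by the metric $d(f,g)=\sum_{n=1}^\infty 2^{-n}\sup_{\rho(x,x_0)\le n}\min\{1,\rho(f(x),g(x))\}$ for a fixed $x_0\in X$. *)

From Stdlib Require Import Reals.
From Coquelicot Require Import Coquelicot.
Open Scope R_scope.

Section Defs.
Context {X : Type}.

Definition is_metric (rho : X -> X -> R) : Prop :=
  (forall x y, 0 <= rho x y) /\
  (forall x y, rho x y = 0 <-> x = y) /\
  (forall x y, rho x y = rho y x) /\
  (forall x y z, rho x z <= rho x y + rho y z).

Definition cauchy_seq (rho : X -> X -> R) (u : nat -> X) : Prop :=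
  forall eps, 0 < eps -> exists N, forall m n, (N <= m)%nat -> (N <= n)%nat ->
    rho (u m) (u n) < eps.

Definition converges_to (rho : X -> X -> R) (u : nat -> X) (l : X) : Prop :=
  forall eps, 0 < eps -> exists N, forall n, (N <= n)%nat -> rho (u n) l < eps.

Definition complete_metric (rho : X -> X -> R) : Prop :=
  forall u, cauchy_seq rho u -> exists l, converges_to rho u l.

Definition unbounded_metric (rho : X -> X -> R) : Prop :=
  forall M, exists x y, M < rho x y.

(* Coherent system of geodesics Gamma: G x y is the unique element of Gamma
   from x to y (only its values on [0, rho x y] matter). *)
Definition coherent_geodesics (rho : X -> X -> R) (G : X -> X -> R -> X) : Prop :=
  (forall x y, G x y 0 = x /\ G x y (rho x y) = y /\
     forall s t, 0 <= s <= rho x y -> 0 <= t <= rho x y ->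
       rho (G x y s) (G x y t) = Rabs (s - t)) /\
  (forall x y t, 0 <= t <= rho x y -> G y x t = G x y (rho x y - t)) /\
  (forall x y t1 t2 t, 0 <= t1 -> t1 <= t2 -> t2 <= rho x y ->
     0 <= t <= t2 - t1 ->
     G (G x y t1) (G x y t2) t = G x y (t + t1)).

Definition gcomb (rho : X -> X -> R) (G : X -> X -> R -> X) (x y : X) (t : R) : X :=
  G x y (t * rho x y).

Definition hyperbolic (rho : X -> X -> R) (G : X -> X -> R -> X) : Prop :=
  forall x y z t, 0 <= t <= 1 ->
    rho (gcomb rho G x y t) (gcomb rho G x z t) <= t * rho y z.

Definition modulus (rho : X -> X -> R) (f : X -> X) (s : R) : Rbar :=
  Lub_Rbar (fun r => exists x y, rho x y <= s /\ r = rho (f x) (f y)).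

Definition in_Comega (rho : X -> X -> R) (om : R -> R) (f : X -> X) : Prop :=
  forall s, 0 <= s -> Rbar_le (modulus rho f s) (Finite (om s)).

Definition dist_ub (rho : X -> X -> R) (x0 : X) (f g : X -> X) : R :=
  Series (fun n : nat => / 2 ^ (S n) *
    real (Lub_Rbar (fun r => exists x, rho x x0 <= INR (S n) /\
                              r = Rmin 1 (rho (f x) (g x))))).

Definition closureC rho om x0 (A : (X -> X) -> Prop) : (X -> X) -> Prop :=
  fun f => in_Comega rho om f /\
    forall r, 0 < r -> exists g, A g /\ in_Comega rho om g /\ dist_ub rho x0 f g < r.

Definition interiorC rho om x0 (A : (X -> X) -> Prop) : (X -> X) -> Prop :=
  fun f => in_Comega rho om f /\ A f /\
    exists r, 0 < r /\ forall g, in_Comega rho om g -> dist_ub rho x0 f g < r -> A g.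

Definition nowhere_denseC rho om x0 (A : (X -> X) -> Prop) : Prop :=
  forall f, ~ interiorC rho om x0 (closureC rho om x0 A) f.

Definition meagreC rho om x0 (M : (X -> X) -> Prop) : Prop :=
  (forall f, M f -> in_Comega rho om f) /\
  exists A : nat -> (X -> X) -> Prop,
    (forall n, nowhere_denseC rho om x0 (A n)) /\
    (forall f, M f -> exists n, A n f).

End Defs.

Definition admissible_modulus (om : R -> R) : Prop :=
  (forall s, 0 <= s -> 0 <= om s) /\
  om 0 = 0 /\
  (forall s, 0 <= s -> forall eps, 0 < eps -> exists delta, 0 < delta /\
     forall t, 0 <= t -> Rabs (t - s) < delta -> Rabs (om t - om s) < eps) /\
  (forall a b l, 0 <= a -> 0 <= b -> 0 <= l <= 1 ->
     l * om a + (1 - l) * om b <= om (l * a + (1 - l) * b)) /\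
  (forall a b, 0 <= a -> a <= b -> om a <= om b) /\
  (exists s, 0 <= s /\ om s <> 0).

(* A map f in C_omega fails omega_f = omega exactly when, for some nonnegative
   rationals q and c with c < omega(q), rho (f x) (f y) <= c whenever rho x y <= q.
   The exceptional set is thus covered by countably many sets, each closed for d.
   None of them contains a ball, because d sees f only on bounded sets up to a
   small error, so f may be modified far away from the base point: first f is
   tapered along geodesics to a constant outside a large ball, then a bump
   y |-> G a b (max 0 (A - omega (rho y z))) of height A > c is planted in the ball
   of radius q about a distant point z.  Hyperbolicity and the concavity of omega
   (through the monotonicity of omega(t)/t) keep every intermediate map in C_omega. *)

From Stdlib Require Import Reals Lra Lia Classical ZArith Cantor.
From Coquelicot Require Import Coquelicot.
Open Scope R_scope.

Lemma exists_INR_between r : 0 <= r -> exists n : nat, r < INR n <= r + 1.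
Proof.
  intros Hr. destruct (archimed r) as [H1 H2].
  assert (Hz : (0 <= up r)%Z) by (apply le_IZR; lra).
  exists (Z.to_nat (up r)). rewrite INR_IZR_INZ, Z2Nat.id by auto. lra.
Qed.

Lemma last_before_failure (P : nat -> Prop) M : P 0%nat -> ~ P M ->
  exists k, (k < M)%nat /\ P k /\ ~ P (S k).
Proof.
  intros H0. induction M as [|M IH]; intros HM; [contradiction|].
  destruct (classic (P M)) as [HPM|HPM].
  - exists M. auto.
  - destruct (IH HPM) as [k [Hk1 Hk2]]. exists k. split; [lia|auto].
Qed.

(* In the tail of the series defining dist_ub the factor (2/3)^n gets small,
   while the factor (3/4)^n keeps the bounds summable. *)
Lemma inv_pow2_split n : / 2 ^ (S n) = / 2 * ((2 / 3) ^ n * (3 / 4) ^ n).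
Proof. rewrite <- Rpow_mult_distr, <- pow_inv. simpl. f_equal. f_equal. field. Qed.

Lemma pow_le1 x n : 0 <= x <= 1 -> 0 <= x ^ n <= 1.
Proof. intros. split; [apply pow_le; lra|]. rewrite <- (pow1 n). apply pow_incr. lra. Qed.

Lemma pow_le_pow_ge x m n : 0 <= x <= 1 -> (m <= n)%nat -> x ^ n <= x ^ m.
Proof.
  intros Hx Hmn. replace n with (m + (n - m))%nat by lia. rewrite pow_add.
  pose proof (pow_le1 x m Hx). pose proof (pow_le1 x (n - m) Hx). nra.
Qed.

Definition nnrat n := INR (fst (Cantor.of_nat n)) / INR (S (snd (Cantor.of_nat n))).

Lemma nnrat_ge0 n : 0 <= nnrat n.
Proof.
  apply Rdiv_le_0_compat; [apply pos_INR|]. apply lt_0_INR. lia.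
Qed.

Lemma nnrat_dense l u : 0 <= l < u -> exists n, l < nnrat n < u.
Proof.
  intros Hlu.
  destruct (exists_INR_between (/ (u - l))) as [b [Hb _]].
  { left. apply Rinv_0_lt_compat. lra. }
  assert (Hb1 : 0 < INR (S b)) by (apply lt_0_INR; lia).
  destruct (exists_INR_between (l * INR (S b))) as [a [Ha1 Ha2]]; [nra|].
  exists (Cantor.to_nat (a, b)). unfold nnrat. rewrite Cantor.cancel_of_to. simpl fst; simpl snd.
  assert (Hstep : 1 < (u - l) * INR (S b)).
  { rewrite S_INR. apply (Rmult_lt_compat_l (u - l)) in Hb; [|lra].
    rewrite Rinv_r in Hb by lra. nra. }
  split; apply (Rmult_lt_reg_r (INR (S b))); auto;
    replace (INR a / INR (S b) * INR (S b)) with (INR a) by (field; lra); nra.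
Qed.

Section Genericity.
Context {X : Type} (rho : X -> X -> R) (G : X -> X -> R -> X) (om : R -> R).
Hypothesis rho_metric : is_metric rho.
Hypothesis G_coherent : coherent_geodesics rho G.
Hypothesis G_hyperbolic : hyperbolic rho G.
Hypothesis om_admissible : admissible_modulus om.
Hypothesis rho_unbounded : unbounded_metric rho.

Local Notation gc := (gcomb rho G).

Lemma rho_ge0 x y : 0 <= rho x y.
Proof. destruct rho_metric as [H _]; apply H. Qed.

Lemma rho_refl x : rho x x = 0.
Proof. destruct rho_metric as [_ [H _]]; apply H; reflexivity. Qed.

Lemma rho_sym x y : rho x y = rho y x.
Proof. destruct rho_metric as [_ [_ [H _]]]; apply H. Qed.

Lemma rho_triangle x y z : rho x z <= rho x y + rho y z.
Proof. destruct rho_metric as [_ [_ [_ H]]]; apply H. Qed.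

Lemma rho_diff_le x y z : Rabs (rho x z - rho y z) <= rho x y.
Proof.
  pose proof (rho_triangle x y z) as Hxz. pose proof (rho_triangle y x z) as Hyz.
  rewrite (rho_sym y x) in Hyz. apply Rabs_le. lra.
Qed.

Lemma exists_far_point p M : exists z, M <= rho p z.
Proof.
  destruct (rho_unbounded (2 * Rabs M)) as [x [y Hxy]].
  pose proof (rho_triangle x p y). pose proof (Rle_abs M).
  destruct (Rle_dec (Rabs M) (rho p y)).
  - exists y. lra.
  - exists x. rewrite rho_sym. lra.
Qed.

Lemma G_start a b : G a b 0 = a.
Proof. destruct G_coherent as [H _]; apply H. Qed.

Lemma G_end a b : G a b (rho a b) = b.
Proof. destruct G_coherent as [H _]; apply H. Qed.

Lemma G_isometry a b s t : 0 <= s <= rho a b -> 0 <= t <= rho a b ->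
  rho (G a b s) (G a b t) = Rabs (s - t).
Proof. destruct G_coherent as [H _]; apply H. Qed.

Lemma rho_G_start a b t : 0 <= t <= rho a b -> rho a (G a b t) = t.
Proof.
  intros Ht. rewrite <- (G_start a b) at 1. rewrite G_isometry by lra.
  rewrite Rabs_left1 by lra. ring.
Qed.

Lemma gcomb_end a b : gc a b 1 = b.
Proof. unfold gcomb. rewrite Rmult_1_l. apply G_end. Qed.

Lemma gcomb_dist a b t u : 0 <= t <= 1 -> 0 <= u <= 1 ->
  rho (gc a b t) (gc a b u) = Rabs (t - u) * rho a b.
Proof.
  intros Ht Hu. unfold gcomb. pose proof (rho_ge0 a b).
  rewrite G_isometry by (split; nra).
  replace (t * rho a b - u * rho a b) with ((t - u) * rho a b) by ring.
  rewrite Rabs_mult, (Rabs_right (rho a b)) by lra. reflexivity.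
Qed.

Lemma rho_gcomb_start a b t : 0 <= t <= 1 -> rho a (gc a b t) = t * rho a b.
Proof.
  intros Ht. unfold gcomb. apply rho_G_start. pose proof (rho_ge0 a b). split; nra.
Qed.

Lemma rho_gcomb_end a b t : 0 <= t <= 1 -> rho b (gc a b t) = (1 - t) * rho a b.
Proof.
  intros Ht. rewrite <- (gcomb_end a b) at 1. rewrite gcomb_dist by lra.
  rewrite Rabs_right by lra. reflexivity.
Qed.

Lemma rho_gcomb_le w a b t : 0 <= t <= 1 ->
  rho w (gc a b t) <= (1 - t) * rho w a + t * rho w b.
Proof.
  intros Ht. eapply Rle_trans; [apply (rho_triangle w (gc a w t))|].
  rewrite rho_gcomb_end, (rho_sym a w) by lra.
  pose proof (G_hyperbolic a w b t Ht). lra.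
Qed.

Lemma rho_gcomb_gcomb_le a b c t u : 0 <= t <= 1 -> 0 <= u <= 1 ->
  rho (gc a b t) (gc a c u) <= Rabs (t - u) * rho a b + u * rho b c.
Proof.
  intros Ht Hu. eapply Rle_trans; [apply (rho_triangle _ (gc a b u))|].
  rewrite gcomb_dist by auto. pose proof (G_hyperbolic a b c u Hu). lra.
Qed.

Lemma rho_G_le_max w a b t : 0 <= t <= rho a b ->
  rho w (G a b t) <= Rmax (rho w a) (rho w b).
Proof.
  intros Ht. destruct (Req_dec (rho a b) 0) as [E|E].
  - replace t with 0 by lra. rewrite G_start. apply Rmax_l.
  - pose proof (rho_ge0 a b).
    assert (Hs : 0 <= t / rho a b <= 1).
    { split; [apply Rdiv_le_0_compat; lra|].
      apply (Rmult_le_reg_r (rho a b)); [lra|]. field_simplify; lra. }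
    replace (G a b t) with (gc a b (t / rho a b))
      by (unfold gcomb; f_equal; field; auto).
    eapply Rle_trans; [apply rho_gcomb_le; auto|].
    pose proof (Rmax_l (rho w a) (rho w b)). pose proof (Rmax_r (rho w a) (rho w b)).
    nra.
Qed.

Lemma om_ge0 s : 0 <= s -> 0 <= om s.
Proof. destruct om_admissible as [H _]; apply H. Qed.

Lemma om_0 : om 0 = 0.
Proof. destruct om_admissible as [_ [H _]]; apply H. Qed.

Lemma om_le a b : 0 <= a -> a <= b -> om a <= om b.
Proof. destruct om_admissible as [_ [_ [_ [_ [H _]]]]]; apply H. Qed.

Lemma om_ratio_antitone a b : 0 <= a <= b -> a * om b <= b * om a.
Proof.
  intros Hab. destruct (Req_dec b 0) as [E|E].
  - replace a with 0 by lra. subst. lra.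
  - destruct om_admissible as [_ [_ [_ [Hconc _]]]].
    assert (Hl : 0 <= a / b <= 1).
    { split; [apply Rdiv_le_0_compat; lra|].
      apply (Rmult_le_reg_r b); [lra|]. field_simplify; lra. }
    pose proof (Hconc b 0 (a / b) ltac:(lra) (Rle_refl 0) Hl) as C.
    rewrite om_0 in C.
    replace (a / b * b + (1 - a / b) * 0) with a in C by (field; lra).
    apply (Rmult_le_reg_r (/ b)); [apply Rinv_0_lt_compat; lra|].
    replace (b * om a * / b) with (om a) by (field; lra).
    replace (a * om b * / b) with (a / b * om b + (1 - a / b) * 0) by (field; lra).
    lra.
Qed.

Lemma om_mul_le a d : 0 <= a -> 0 <= d -> d * om a <= (a + d) * om d.
Proof.
  intros Ha Hd. pose proof (om_ge0 d Hd). pose proof (om_ge0 a Ha).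
  destruct (Rle_lt_dec a d) as [Hle|Hlt].
  - pose proof (om_le a d Ha Hle). nra.
  - pose proof (om_ratio_antitone d a ltac:(lra)). nra.
Qed.

Lemma om_subadditive u v : 0 <= u -> 0 <= v -> om (u + v) <= om u + om v.
Proof.
  intros Hu Hv. destruct (Req_dec (u + v) 0) as [E|E].
  - replace u with 0 by lra. replace v with 0 by lra. rewrite Rplus_0_r, om_0. lra.
  - pose proof (om_ratio_antitone u (u + v) ltac:(lra)).
    pose proof (om_ratio_antitone v (u + v) ltac:(lra)).
    apply (Rmult_le_reg_l (u + v)); lra.
Qed.

Lemma om_dist_le u v : 0 <= u -> 0 <= v -> Rabs (om u - om v) <= om (Rabs (u - v)).
Proof.
  intros Hu Hv. destruct (Rle_dec u v) as [Huv|Hvu].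
  - pose proof (om_subadditive u (v - u) Hu ltac:(lra)) as Hsub.
    replace (u + (v - u)) with v in Hsub by ring.
    pose proof (om_le u v Hu Huv).
    rewrite !Rabs_left1 by lra. replace (- (u - v)) with (v - u) by ring. lra.
  - pose proof (om_subadditive v (u - v) Hv ltac:(lra)) as Hsub.
    replace (v + (u - v)) with u in Hsub by ring.
    pose proof (om_le v u Hv ltac:(lra)).
    rewrite !Rabs_right by lra. lra.
Qed.

Definition has_modulus (f : X -> X) := forall x y, rho (f x) (f y) <= om (rho x y).

Definition close_on x0 R d (f g : X -> X) := forall x, rho x x0 <= R -> rho (f x) (g x) <= d.

Definition spreads q c (g : X -> X) := exists z y, rho z y <= q /\ c < rho (g z) (g y).

Lemma in_Comega_iff f : in_Comega rho om f <-> has_modulus f.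
Proof.
  split.
  - intros Hf x y. specialize (Hf (rho x y) (rho_ge0 x y)). unfold modulus in Hf.
    set (E := fun r => exists x' y', rho x' y' <= rho x y /\ r = rho (f x') (f y')) in Hf.
    destruct (Lub_Rbar_correct E) as [Hub _].
    assert (HE : E (rho (f x) (f y))) by (exists x, y; split; [lra|auto]).
    exact (Rbar_le_trans _ _ _ (Hub _ HE) Hf).
  - intros Hf s Hs. unfold modulus.
    destruct (Lub_Rbar_correct (fun r => exists x y, rho x y <= s /\ r = rho (f x) (f y)))
      as [_ Hlub].
    apply Hlub. intros r [x [y [Hxy ->]]]. simpl.
    eapply Rle_trans; [apply Hf|]. apply om_le; auto. apply rho_ge0.
Qed.

Definition ramp K r := Rmin 1 (r / K).

Lemma ramp_range K r : 0 < K -> 0 <= r -> 0 <= ramp K r <= 1.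
Proof.
  intros. unfold ramp. split; [|apply Rmin_l].
  apply Rmin_glb; [lra|]. apply Rdiv_le_0_compat; lra.
Qed.

Lemma ramp_le K r s : 0 < K -> r <= s -> ramp K r <= ramp K s.
Proof.
  intros. unfold ramp. apply Rle_min_compat_l.
  apply Rmult_le_compat_r; [|lra]. left; apply Rinv_0_lt_compat; lra.
Qed.

Lemma ramp_le_div K r : ramp K r <= r / K.
Proof. apply Rmin_r. Qed.

Lemma ramp_eq1 K r : 0 < K -> K <= r -> ramp K r = 1.
Proof.
  intros. unfold ramp. apply Rmin_left.
  apply (Rmult_le_reg_r K); [lra|]. field_simplify; lra.
Qed.

Lemma ramp_eq_div K r : 0 < K -> r <= K -> ramp K r = r / K.
Proof.
  intros. unfold ramp. apply Rmin_right.
  apply (Rmult_le_reg_r K); [lra|]. field_simplify; lra.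
Qed.

Lemma ramp_increment_le K r s : 0 < K -> 0 <= r <= s ->
  (ramp K s - ramp K r) * om r <= ramp K s * om (s - r).
Proof.
  intros HK [Hr Hrs].
  pose proof (om_ge0 r Hr). pose proof (om_ge0 (s - r) ltac:(lra)).
  destruct (Rle_dec s K) as [Hs|Hs].
  - rewrite !ramp_eq_div by lra.
    pose proof (om_mul_le r (s - r) Hr ltac:(lra)) as Hmul.
    replace (r + (s - r)) with s in Hmul by ring.
    apply (Rmult_le_reg_r K); [lra|].
    replace ((s / K - r / K) * om r * K) with ((s - r) * om r) by (field; lra).
    replace (s / K * om (s - r) * K) with (s * om (s - r)) by (field; lra).
    lra.
  - rewrite (ramp_eq1 K s) by lra.
    destruct (Rle_dec r K) as [Hr'|Hr'].
    + rewrite ramp_eq_div by lra.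
      pose proof (om_mul_le r (K - r) Hr ltac:(lra)) as Hmul.
      replace (r + (K - r)) with K in Hmul by ring.
      pose proof (om_le (K - r) (s - r) ltac:(lra) ltac:(lra)).
      apply (Rmult_le_reg_r K); [lra|].
      replace ((1 - r / K) * om r * K) with ((K - r) * om r) by (field; lra).
      nra.
    + rewrite ramp_eq1 by lra. lra.
Qed.

Definition taper (F : X -> X) x2 K x := gc (F x2) (F x) (1 - ramp K (rho x x2)).

Lemma taper_far F x2 K x : 0 < K -> K <= rho x x2 -> taper F x2 K x = F x2.
Proof.
  intros. unfold taper. rewrite ramp_eq1 by auto. replace (1 - 1) with 0 by ring.
  unfold gcomb. rewrite Rmult_0_l. apply G_start.
Qed.

Lemma rho_taper F x2 K x : 0 < K ->
  rho (F x) (taper F x2 K x) = ramp K (rho x x2) * rho (F x2) (F x).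
Proof.
  intros HK. unfold taper. pose proof (ramp_range K (rho x x2) HK (rho_ge0 _ _)).
  rewrite rho_gcomb_end by lra. f_equal. ring.
Qed.

Lemma rho_taper_le F x2 K R x : has_modulus F -> 0 < K -> rho x x2 <= R ->
  rho (F x) (taper F x2 K x) <= R * om R / K.
Proof.
  intros HF HK Hx. rewrite rho_taper by auto.
  pose proof (rho_ge0 x x2). pose proof (rho_ge0 (F x2) (F x)).
  pose proof (ramp_range K (rho x x2) HK (rho_ge0 _ _)).
  assert (HFR : rho (F x2) (F x) <= om R).
  { eapply Rle_trans; [apply HF|]. rewrite rho_sym. apply om_le; auto. }
  assert (Hr : ramp K (rho x x2) <= R / K).
  { eapply Rle_trans; [apply ramp_le_div|].
    apply Rmult_le_compat_r; [left; apply Rinv_0_lt_compat|]; lra. }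
  replace (R * om R / K) with (R / K * om R) by (field; lra).
  apply Rmult_le_compat; lra.
Qed.

Lemma taper_modulus F x2 K : has_modulus F -> 0 < K -> has_modulus (taper F x2 K).
Proof.
  intros HF HK.
  assert (Hle : forall x y, rho x x2 <= rho y x2 ->
            rho (taper F x2 K x) (taper F x2 K y) <= om (rho x y)).
  { intros x y Hxy. unfold taper.
    set (lx := ramp K (rho x x2)). set (ly := ramp K (rho y x2)).
    assert (Hlx : 0 <= lx <= 1) by apply (ramp_range K _ HK (rho_ge0 _ _)).
    assert (Hly : 0 <= ly <= 1) by apply (ramp_range K _ HK (rho_ge0 _ _)).
    assert (Hlxy : lx <= ly) by apply (ramp_le K _ _ HK Hxy).
    assert (Hinc := ramp_increment_le K _ _ HK (conj (rho_ge0 x x2) Hxy)).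
    fold lx ly in Hinc.
    eapply Rle_trans; [apply rho_gcomb_gcomb_le; lra|].
    replace (Rabs (1 - lx - (1 - ly))) with (ly - lx) by (rewrite Rabs_right by lra; ring).
    assert (Hd : rho y x2 - rho x x2 <= rho x y).
    { pose proof (rho_diff_le y x x2) as Hdiff. rewrite (rho_sym y x) in Hdiff.
      pose proof (Rle_abs (rho y x2 - rho x x2)). lra. }
    assert (Hom : om (rho y x2 - rho x x2) <= om (rho x y)) by (apply om_le; lra).
    assert (HF1 := HF x2 x). rewrite (rho_sym x2 x) in HF1.
    assert (HF2 := HF x y).
    pose proof (om_ge0 (rho x y) (rho_ge0 _ _)).
    assert ((ly - lx) * rho (F x2) (F x) <= (ly - lx) * om (rho x x2))
      by (apply Rmult_le_compat_l; lra).
    assert ((1 - ly) * rho (F x) (F y) <= (1 - ly) * om (rho x y))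
      by (apply Rmult_le_compat_l; lra).
    assert (ly * om (rho y x2 - rho x x2) <= ly * om (rho x y))
      by (apply Rmult_le_compat_l; lra).
    lra. }
  intros x y. destruct (Rle_dec (rho x x2) (rho y x2)).
  - apply Hle; auto.
  - rewrite (rho_sym (taper F x2 K x)), (rho_sym x). apply Hle; lra.
Qed.

Definition bump_height A z y := Rmax 0 (A - om (rho y z)).

Definition bump a b A z y := G a b (bump_height A z y).

Lemma bump_height_range A z y : 0 <= A -> 0 <= bump_height A z y <= A.
Proof.
  intros. unfold bump_height. pose proof (om_ge0 (rho y z) (rho_ge0 _ _)).
  split; [apply Rmax_l|]. apply Rmax_lub; lra.
Qed.

Lemma bump_modulus a b A z : 0 <= A <= rho a b -> has_modulus (bump a b A z).
Proof.
  intros HA x y. unfold bump.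
  pose proof (bump_height_range A z x ltac:(lra)).
  pose proof (bump_height_range A z y ltac:(lra)).
  rewrite G_isometry by lra.
  apply Rle_trans with (Rabs (om (rho x z) - om (rho y z))).
  { unfold bump_height, Rmax. repeat destruct Rle_dec;
      unfold Rabs; repeat destruct Rcase_abs; lra. }
  eapply Rle_trans; [apply om_dist_le; apply rho_ge0|].
  apply om_le; [apply Rabs_pos|apply rho_diff_le].
Qed.

Lemma bump_center a b A z : 0 <= A -> bump a b A z z = G a b A.
Proof.
  intros. unfold bump, bump_height. rewrite rho_refl, om_0, Rminus_0_r.
  rewrite Rmax_right by lra. reflexivity.
Qed.

Lemma bump_outside a b A z q v : A <= om q -> 0 <= q -> q <= rho v z ->
  bump a b A z v = a.
Proof.
  intros HAq Hq Hv. unfold bump, bump_height. pose proof (om_le q (rho v z) Hq Hv).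
  rewrite Rmax_left by lra. apply G_start.
Qed.

Definition glue z q (phi psi : X -> X) w :=
  if Rlt_dec (rho w z) q then phi w else psi w.

Lemma glue_modulus z q phi psi : has_modulus phi -> has_modulus psi ->
  (forall u v, rho u z < q -> q <= rho v z -> rho (phi u) (psi v) <= om (rho u v)) ->
  has_modulus (glue z q phi psi).
Proof.
  intros Hphi Hpsi Hcross u v. unfold glue.
  destruct (Rlt_dec (rho u z) q) as [Hu|Hu]; destruct (Rlt_dec (rho v z) q) as [Hv|Hv];
    auto; [|rewrite rho_sym, (rho_sym u)]; apply Hcross; lra.
Qed.

Lemma bump_taper_cross F x2 b A q K L z u v :
  has_modulus F -> 0 <= A <= rho (F x2) b -> A <= om q -> 0 <= q -> 0 < K -> 0 <= L ->
  (forall x, rho x x2 < K -> forall t, 0 <= t <= A ->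
     rho (taper F x2 K x) (G (F x2) b t) <= om L) ->
  K + q + L <= rho x2 z -> rho u z < q -> q <= rho v z ->
  rho (bump (F x2) b A z u) (taper F x2 K v) <= om (rho u v).
Proof.
  intros HF HA HAq Hq HK HL Hnear Hz Hu Hv.
  destruct (Rle_dec K (rho v x2)) as [Hfar|Hclose].
  - rewrite taper_far by auto.
    pose proof (bump_modulus (F x2) b A z HA u v) as Hb.
    rewrite (bump_outside (F x2) b A z q v) in Hb by auto. exact Hb.
  - rewrite rho_sym. unfold bump.
    eapply Rle_trans; [apply Hnear; [lra|apply bump_height_range; lra]|].
    pose proof (rho_triangle x2 v z) as Hx2v. pose proof (rho_triangle v u z) as Hvu.
    rewrite (rho_sym x2 v) in Hx2v. rewrite (rho_sym v u) in Hvu.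
    apply om_le; lra.
Qed.

(* The bump is placed in the ball of radius q about a point z so far away that
   the tapered map is the constant F x2 around it; [reach] is what keeps the
   modulus across the boundary of that ball when the tapered map is not constant. *)
Lemma bump_modification F x0 x2 b A q c R0 d :
  has_modulus F -> 0 <= A <= rho (F x2) b -> A <= om q -> c < A -> 0 < q ->
  0 <= R0 -> 0 < d ->
  (forall K, 0 < K -> exists L, 0 <= L /\ forall x, rho x x2 < K ->
     forall t, 0 <= t <= A -> rho (taper F x2 K x) (G (F x2) b t) <= om L) ->
  exists g, has_modulus g /\ close_on x0 R0 d F g /\ spreads q c g.
Proof.
  intros HF HA HAq HcA Hq HR0 Hd reach.
  set (R := R0 + rho x0 x2).
  assert (HR : 0 <= R) by (pose proof (rho_ge0 x0 x2); unfold R; lra).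
  set (K := R * om R / d + 1).
  assert (HK : 0 < K).
  { assert (0 <= R * om R / d)
      by (apply Rdiv_le_0_compat; [apply Rmult_le_pos; [|apply om_ge0]|]; lra).
    unfold K; lra. }
  destruct (reach K HK) as [L [HL Hnear]].
  destruct (exists_far_point x2 (K + q + L + R)) as [z Hz].
  destruct (exists_far_point z q) as [p Hp].
  set (y := G z p q).
  assert (Hzy : rho z y = q) by (apply rho_G_start; lra).
  exists (glue z q (bump (F x2) b A z) (taper F x2 K)). split; [|split].
  - apply glue_modulus; [apply bump_modulus; auto|apply taper_modulus; auto|].
    intros u v Hu Hv. apply (bump_taper_cross F x2 b A q K L); auto; lra.
  - intros x Hx.
    assert (Hxx2 : rho x x2 <= R) by (pose proof (rho_triangle x x0 x2); unfold R; lra).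
    assert (Hxz : q <= rho x z).
    { pose proof (rho_triangle x2 x z) as Htri. rewrite (rho_sym x2 x) in Htri. lra. }
    unfold glue. destruct (Rlt_dec (rho x z) q) as [|_]; [lra|].
    eapply Rle_trans; [apply (rho_taper_le F x2 K R); auto|].
    apply (Rmult_le_reg_r K); [lra|].
    replace (R * om R / K * K) with (R * om R) by (field; lra).
    replace (d * K) with (R * om R + d) by (unfold K; field; lra). lra.
  - exists z, y. split; [lra|]. unfold glue.
    rewrite rho_refl, (rho_sym y z), Hzy.
    destruct (Rlt_dec 0 q) as [_|]; [|lra]. destruct (Rlt_dec q q) as [|_]; [lra|].
    assert (Hyx2 : K <= rho y x2).
    { pose proof (rho_triangle x2 y z) as Htri.
      rewrite (rho_sym x2 y), (rho_sym y z) in Htri. lra. }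
    rewrite bump_center, taper_far, rho_sym, rho_G_start by lra. lra.
Qed.

(* Walk from F x0 towards a far point in steps of length dl and stop at the last
   point of the walk that is still within W of every value of F. *)
Lemma exists_almost_extremal_point {T : Type} (F : T -> X) (x0 : T) W dl :
  0 <= W -> 0 < dl -> (forall x y, rho (F x) (F y) <= W) ->
  exists x2 b, W - dl < rho (F x2) b /\ forall x, rho (F x) b <= W.
Proof.
  intros HW Hdl HFW.
  destruct (exists_far_point (F x0) (W + dl)) as [p Hp].
  destruct (exists_INR_between (W / dl)) as [M [HM1 HM2]]; [apply Rdiv_le_0_compat; lra|].
  assert (HMdl : W < INR M * dl <= W + dl).
  { split.
    - apply (Rmult_lt_compat_r dl) in HM1; auto.
      replace (W / dl * dl) with W in HM1 by (field; lra). lra.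
    - apply (Rmult_le_compat_r dl) in HM2; [|lra].
      replace ((W / dl + 1) * dl) with (W + dl) in HM2 by (field; lra). lra. }
  set (u := fun k : nat => G (F x0) p (INR k * dl)).
  assert (Hu : forall k, (k <= M)%nat -> 0 <= INR k * dl <= rho (F x0) p).
  { intros k Hk. apply le_INR in Hk. pose proof (pos_INR k). split; nra. }
  set (P := fun k : nat => forall x, rho (F x) (u k) <= W).
  assert (P0 : P 0%nat) by (intros x; unfold u; rewrite Rmult_0_l, G_start; apply HFW).
  assert (PM : ~ P M).
  { intros HPM. specialize (HPM x0). unfold u in HPM.
    rewrite rho_G_start in HPM by (apply Hu; lia). lra. }
  destruct (last_before_failure P M P0 PM) as [k [Hk [Pk nPk]]].
  apply not_all_ex_not in nPk. destruct nPk as [x2 Hx2]. apply Rnot_le_lt in Hx2.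
  assert (Hstep : rho (u k) (u (S k)) = dl).
  { unfold u. rewrite G_isometry by (apply Hu; lia).
    rewrite S_INR, Rabs_left1; [ring|lra]. }
  exists x2, (u k). split; [|exact Pk].
  pose proof (rho_triangle (F x2) (u k) (u (S k))). lra.
Qed.

Lemma taper_near_segment F x2 b W K x t :
  (forall x y, rho (F x) (F y) <= W) -> (forall x, rho (F x) b <= W) -> 0 < K ->
  0 <= t <= rho (F x2) b -> rho (taper F x2 K x) (G (F x2) b t) <= W.
Proof.
  intros HFW HbW HK Ht.
  pose proof (ramp_range K (rho x x2) HK (rho_ge0 _ _)).
  eapply Rle_trans; [apply rho_G_le_max, Ht|]. apply Rmax_lub; unfold taper.
  - rewrite rho_sym, rho_gcomb_start by lra.
    pose proof (HFW x2 x). pose proof (rho_ge0 (F x2) (F x)). nra.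
  - rewrite rho_sym. eapply Rle_trans; [apply rho_gcomb_le; lra|].
    rewrite (rho_sym b (F x2)), (rho_sym b (F x)).
    pose proof (HbW x2). pose proof (HbW x). nra.
Qed.

Lemma modification_om_unbounded f x0 q c R0 d :
  has_modulus f -> (forall B, exists t, 0 <= t /\ B < om t) ->
  0 < q -> c < om q -> 0 <= R0 -> 0 < d ->
  exists g, has_modulus g /\ close_on x0 R0 d f g /\ spreads q c g.
Proof.
  intros Hf Hunb Hq Hcq HR0 Hd.
  pose proof (om_ge0 q ltac:(lra)).
  destruct (exists_far_point (f x0) (om q)) as [b Hb].
  apply (bump_modification f x0 x0 b (om q)); auto; try lra.
  intros K HK. destruct (Hunb (om K + om q)) as [L [HL HLK]].
  exists L. split; auto. intros x Hx t Ht.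
  eapply Rle_trans; [apply (rho_triangle _ (f x0))|].
  unfold taper. pose proof (ramp_range K (rho x x0) HK (rho_ge0 _ _)).
  rewrite rho_sym, rho_gcomb_start, rho_G_start by lra.
  pose proof (Hf x0 x). pose proof (rho_ge0 (f x0) (f x)).
  pose proof (om_le (rho x0 x) K (rho_ge0 _ _) ltac:(rewrite rho_sym; lra)).
  nra.
Qed.

Definition contract (f : X -> X) x0 eps x := gc (f x0) (f x) (1 - eps).

Lemma rho_contract_contract_le f x0 eps x y : has_modulus f -> 0 <= eps <= 1 ->
  rho (contract f x0 eps x) (contract f x0 eps y) <= (1 - eps) * om (rho x y).
Proof.
  intros Hf Heps. eapply Rle_trans; [apply G_hyperbolic; lra|].
  apply Rmult_le_compat_l; [lra|apply Hf].
Qed.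

Lemma contract_modulus f x0 eps : has_modulus f -> 0 <= eps <= 1 ->
  has_modulus (contract f x0 eps).
Proof.
  intros Hf Heps x y. eapply Rle_trans; [apply rho_contract_contract_le; auto|].
  pose proof (om_ge0 (rho x y) (rho_ge0 _ _)). nra.
Qed.

Lemma rho_contract_le f x0 eps Ws x : has_modulus f -> (forall t, 0 <= t -> om t <= Ws) ->
  0 <= eps <= 1 -> rho (f x) (contract f x0 eps x) <= eps * Ws.
Proof.
  intros Hf Hub Heps. unfold contract. rewrite rho_gcomb_end by lra.
  replace (1 - (1 - eps)) with eps by ring.
  pose proof (Hf x0 x). pose proof (Hub (rho x0 x) (rho_ge0 _ _)).
  pose proof (rho_ge0 (f x0) (f x)). nra.
Qed.

(* Contracting f towards f x0 by the factor 1 - eps pushes all its distances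
   strictly below sup om, which leaves room for an almost extremal point b. *)
Lemma modification_om_bounded f x0 q c R0 d Ws :
  has_modulus f -> (forall t, 0 <= t -> om t <= Ws) ->
  (forall W, W < Ws -> exists t, 0 <= t /\ W < om t) ->
  0 < q -> 0 <= c -> c < om q -> 0 <= R0 -> 0 < d ->
  exists g, has_modulus g /\ close_on x0 R0 d f g /\ spreads q c g.
Proof.
  intros Hf Hub Hlub Hq Hc Hcq HR0 Hd.
  assert (HqWs : om q <= Ws) by (apply Hub; lra).
  set (th := Rmin ((Ws - c) / 2) (d / 2)).
  assert (Hth : 0 < th <= (Ws - c) / 2 /\ th <= d / 2).
  { unfold th. split; [split|]; [apply Rmin_glb_lt| apply Rmin_l | apply Rmin_r]; lra. }
  set (eps := th / Ws).
  assert (Heps : 0 <= eps <= 1 /\ eps * Ws = th).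
  { unfold eps. split; [split|]; [apply Rdiv_le_0_compat; lra| |field; lra].
    apply (Rmult_le_reg_r Ws); [lra|]. field_simplify; lra. }
  set (W := Ws - th).
  set (F := contract f x0 eps).
  assert (HFW : forall x y, rho (F x) (F y) <= W).
  { intros x y. eapply Rle_trans; [apply rho_contract_contract_le; auto; lra|].
    pose proof (Hub (rho x y) (rho_ge0 _ _)). unfold W. nra. }
  assert (HF : has_modulus F) by (apply contract_modulus; auto; lra).
  assert (HfF : close_on x0 R0 (d / 2) f F).
  { intros x _. eapply Rle_trans; [apply (rho_contract_le f x0 eps Ws); auto; lra|]. lra. }
  destruct (exists_almost_extremal_point F x0 W ((W - c) / 2))
    as [x2 [b [Hfar Hb]]]; auto; try (unfold W; lra).
  set (A := Rmin (om q) (rho (F x2) b)).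
  assert (HA : 0 <= A <= rho (F x2) b /\ A <= om q /\ c < A).
  { unfold A. split; [split|split].
    - apply Rmin_glb; [apply om_ge0; lra|apply rho_ge0].
    - apply Rmin_r.
    - apply Rmin_l.
    - apply Rmin_glb_lt; unfold W in *; lra. }
  destruct (bump_modification F x0 x2 b A q c R0 (d / 2)) as [g [Hg [HgF Hgzy]]];
    try tauto; try lra.
  - intros K HK. destruct (Hlub W) as [L [HL HWL]]; [unfold W; lra|].
    exists L. split; auto. intros x _ t Ht.
    eapply Rle_trans; [apply (taper_near_segment F x2 b W); auto; lra|]. lra.
  - exists g. split; [exact Hg|split; [|exact Hgzy]].
    intros x Hx. eapply Rle_trans; [apply (rho_triangle _ (F x))|].
    pose proof (HfF x Hx). pose proof (HgF x Hx). lra.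
Qed.

Lemma exists_modification f x0 q c R0 d :
  has_modulus f -> 0 <= c -> c < om q -> 0 <= q -> 0 <= R0 -> 0 < d ->
  exists g, has_modulus g /\ close_on x0 R0 d f g /\ spreads q c g.
Proof.
  intros Hf Hc Hcq Hq0 HR0 Hd.
  assert (Hq : 0 < q) by (destruct Hq0 as [|<-]; [auto|rewrite om_0 in Hcq; lra]).
  destruct (classic (exists B, forall t, 0 <= t -> om t <= B)) as [[B HB]|HU].
  - set (E := fun v => exists t, 0 <= t /\ v = om t).
    destruct (completeness E) as [Ws [Wub Wlub]].
    + exists B. intros v [t [Ht ->]]. auto.
    + exists (om 0), 0. split; [lra|auto].
    + apply (modification_om_bounded f x0 q c R0 d Ws); auto.
      * intros t Ht. apply Wub. exists t; auto.
      * intros W HW. apply NNPP. intros Hn.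
        assert (HWub : is_upper_bound E W).
        { intros v [t [Ht ->]]. apply Rnot_lt_le. intros Hlt. apply Hn. exists t; auto. }
        specialize (Wlub W HWub). lra.
  - apply modification_om_unbounded; auto.
    intros B. apply NNPP. intros Hn. apply HU. exists B. intros t Ht.
    apply Rnot_lt_le. intros Hlt. apply Hn. exists t; auto.
Qed.

Definition sup_term x0 (f g : X -> X) n :=
  real (Lub_Rbar (fun r => exists x, rho x x0 <= INR (S n) /\ r = Rmin 1 (rho (f x) (g x)))).

Lemma sup_term_spec x0 f g n :
  0 <= sup_term x0 f g n <= 1 /\
  (forall x, rho x x0 <= INR (S n) -> Rmin 1 (rho (f x) (g x)) <= sup_term x0 f g n) /\
  (forall be, (forall x, rho x x0 <= INR (S n) -> Rmin 1 (rho (f x) (g x)) <= be) ->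
     sup_term x0 f g n <= be).
Proof.
  unfold sup_term.
  set (E := fun r => exists x, rho x x0 <= INR (S n) /\ r = Rmin 1 (rho (f x) (g x))).
  destruct (Lub_Rbar_correct E) as [Hub Hlub].
  assert (E0 : E (Rmin 1 (rho (f x0) (g x0)))).
  { exists x0. rewrite rho_refl. split; [apply pos_INR|auto]. }
  assert (U1 : is_ub_Rbar E 1) by (intros r [x [_ ->]]; apply Rmin_l).
  pose proof (Hlub _ U1) as L1. pose proof (Hub _ E0) as L0.
  destruct (Lub_Rbar E) as [l| |]; simpl in L0, L1; try contradiction.
  split; [|split].
  - pose proof (Rmin_glb 1 _ 0 ltac:(lra) (rho_ge0 (f x0) (g x0))). simpl; lra.
  - intros x Hx. apply (Hub (Rmin 1 (rho (f x) (g x)))). exists x; auto.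
  - intros be Hbe. apply (Hlub be). intros r [x [Hx ->]]. apply Hbe; auto.
Qed.

Lemma dist_term_bounds x0 f g n :
  0 <= / 2 ^ (S n) * sup_term x0 f g n <= (3 / 4) ^ n.
Proof.
  destruct (sup_term_spec x0 f g n) as [HT _].
  rewrite inv_pow2_split.
  pose proof (pow_le1 (2 / 3) n ltac:(lra)). pose proof (pow_le1 (3 / 4) n ltac:(lra)).
  set (p := (2 / 3) ^ n) in *. set (r := (3 / 4) ^ n) in *.
  assert (0 <= p * r <= r) by (split; nra). split; nra.
Qed.

Lemma ex_series_dist_terms x0 f g :
  ex_series (fun n => / 2 ^ (S n) * sup_term x0 f g n).
Proof.
  apply (@ex_series_le R_AbsRing R_CompleteNormedModule) with (b := fun n => (3 / 4) ^ n).
  - intros n. change (norm ?u) with (Rabs u). pose proof (dist_term_bounds x0 f g n).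
    rewrite Rabs_pos_eq; lra.
  - apply ex_series_geom. rewrite Rabs_pos_eq; lra.
Qed.

Lemma dist_ub_ge_term x0 f g n x : rho x x0 <= INR (S n) ->
  / 2 ^ (S n) * Rmin 1 (rho (f x) (g x)) <= dist_ub rho x0 f g.
Proof.
  intros Hx. change (dist_ub rho x0 f g) with (Series (fun n => / 2 ^ (S n) * sup_term x0 f g n)).
  set (a := fun n => / 2 ^ (S n) * sup_term x0 f g n).
  assert (Ha : forall k, 0 <= a k) by (intros k; apply dist_term_bounds).
  assert (Hn : / 2 ^ (S n) * Rmin 1 (rho (f x) (g x)) <= a n).
  { apply Rmult_le_compat_l; [left; apply Rinv_0_lt_compat, pow_lt; lra|].
    apply (sup_term_spec x0 f g n); auto. }
  rewrite (Series_incr_n a (S n)) by (lia || apply ex_series_dist_terms). simpl pred.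
  assert (Hs : a n <= sum_f_R0 a n).
  { destruct n; simpl; [lra|]. pose proof (cond_pos_sum a n Ha). lra. }
  assert (Ht : 0 <= Series (fun k => a (S n + k)%nat)).
  { set (t := fun k => a (S n + k)%nat). replace 0 with (0 * Series t) by ring.
    rewrite <- Series_scal_l. apply Series_le.
    - intros k. pose proof (Ha (S n + k)%nat). unfold t. lra.
    - apply (ex_series_incr_n a (S n)), ex_series_dist_terms. }
  lra.
Qed.

Lemma dist_ub_le x0 f g N be : 0 <= be ->
  close_on x0 (INR N) be f g ->
  dist_ub rho x0 f g <= 4 * (be + (2 / 3) ^ N).
Proof.
  intros Hbe Hfg. change (dist_ub rho x0 f g) with (Series (fun n => / 2 ^ (S n) * sup_term x0 f g n)).
  set (C := be + (2 / 3) ^ N).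
  replace (4 * C) with (Series (fun n => C * (3 / 4) ^ n))
    by (rewrite Series_scal_l, Series_geom by (rewrite Rabs_pos_eq; lra); field).
  apply Series_le.
  2:{ apply (@ex_series_scal_l R_AbsRing R_NormedModule), ex_series_geom.
      rewrite Rabs_pos_eq; lra. }
  intros n. split; [apply dist_term_bounds|].
  destruct (sup_term_spec x0 f g n) as [HT [_ Hsup]].
  rewrite inv_pow2_split.
  pose proof (pow_le1 (2 / 3) n ltac:(lra)). pose proof (pow_le1 (3 / 4) n ltac:(lra)).
  pose proof (pow_le1 (2 / 3) N ltac:(lra)).
  destruct (Nat.lt_ge_cases n N) as [HnN|HnN].
  - assert (sup_term x0 f g n <= be).
    { apply Hsup. intros x Hx. eapply Rle_trans; [apply Rmin_r|]. apply Hfg.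
      eapply Rle_trans; [apply Hx|]. apply le_INR. lia. }
    set (p := (2 / 3) ^ n) in *. set (r := (3 / 4) ^ n) in *. set (T := sup_term x0 f g n) in *.
    assert (p * r * T <= r * be) by (apply Rmult_le_compat; nra).
    unfold C. nra.
  - pose proof (pow_le_pow_ge (2 / 3) N n ltac:(lra) HnN).
    set (p := (2 / 3) ^ n) in *. set (r := (3 / 4) ^ n) in *. set (T := sup_term x0 f g n) in *.
    assert (p * r * T <= p * r) by (assert (0 <= p * r) by nra; nra).
    assert (p * r <= (2 / 3) ^ N * r) by nra.
    unfold C. nra.
Qed.

Definition level_set q c (h : X -> X) :=
  c < om q /\ in_Comega rho om h /\ forall x y, rho x y <= q -> rho (h x) (h y) <= c.

Lemma closure_level_set (x0 : X) q c g : closureC rho om x0 (level_set q c) g ->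
  forall z y, rho z y <= q -> rho (g z) (g y) <= c.
Proof.
  intros [_ Hcl] z y Hzy. apply Rnot_lt_le. intros Hgt.
  set (eta := rho (g z) (g y) - c).
  destruct (exists_INR_between (rho z x0 + rho y x0)) as [n [Hn _]].
  { pose proof (rho_ge0 z x0). pose proof (rho_ge0 y x0). lra. }
  assert (Hball : forall x, rho x x0 <= rho z x0 + rho y x0 -> rho x x0 <= INR (S n))
    by (intros; rewrite S_INR; lra).
  assert (Hp : 0 < / 2 ^ S n) by (apply Rinv_0_lt_compat, pow_lt; lra).
  assert (Heta : 0 < Rmin 1 (eta / 2)) by (apply Rmin_glb_lt; unfold eta; lra).
  destruct (Hcl (/ 2 ^ S n * Rmin 1 (eta / 2))) as [h [[_ [_ Hh]] [_ Hgh]]]; [nra|].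
  assert (Hclose : forall x, rho x x0 <= INR (S n) -> rho (g x) (h x) < eta / 2).
  { intros x Hx. apply Rnot_le_lt. intros Hfar.
    pose proof (dist_ub_ge_term x0 g h n x Hx).
    pose proof (Rle_min_compat_l _ _ 1 Hfar). nra. }
  pose proof (Hclose z ltac:(apply Hball; pose proof (rho_ge0 y x0); lra)).
  pose proof (Hclose y ltac:(apply Hball; pose proof (rho_ge0 z x0); lra)).
  pose proof (Hh z y Hzy).
  pose proof (rho_triangle (g z) (h z) (g y)).
  pose proof (rho_triangle (h z) (h y) (g y)) as Htri.
  rewrite (rho_sym (h y) (g y)) in Htri. unfold eta in *. lra.
Qed.

Lemma level_set_nowhere_dense (x0 : X) q c : 0 <= q -> 0 <= c ->
  nowhere_denseC rho om x0 (level_set q c).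
Proof.
  intros Hq Hc f [Hf [[_ Hcl] [r [Hr Hball]]]].
  destruct (Hcl r Hr) as [h [[Hcq _] _]].
  destruct (pow_lt_1_zero (2 / 3) ltac:(rewrite Rabs_pos_eq; lra) (r / 8) ltac:(lra))
    as [N HN].
  specialize (HN N (le_n N)). rewrite Rabs_pos_eq in HN by (apply pow_le; lra).
  destruct (exists_modification f x0 q c (INR N) (r / 8)) as [g [Hg [Hfg [z [y [Hzy Hgzy]]]]]];
    try apply in_Comega_iff; auto; try lra; [apply pos_INR|].
  assert (Hd : dist_ub rho x0 f g < r).
  { eapply Rle_lt_trans; [apply (dist_ub_le x0 f g N (r / 8)); auto; lra|]. lra. }
  pose proof (closure_level_set x0 q c g (Hball g (proj2 (in_Comega_iff g) Hg) Hd) z y Hzy).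
  lra.
Qed.

Lemma modulus_defect (x0 : X) f s : in_Comega rho om f -> 0 <= s ->
  modulus rho f s <> Finite (om s) ->
  exists m, 0 <= m < om s /\ forall x y, rho x y <= s -> rho (f x) (f y) <= m.
Proof.
  intros Hf Hs Hne. pose proof (Hf s Hs) as Hle. unfold modulus in Hle, Hne.
  set (E := fun r => exists x y, rho x y <= s /\ r = rho (f x) (f y)) in Hle, Hne.
  destruct (Lub_Rbar_correct E) as [Hub _].
  assert (E0 : E 0) by (exists x0, x0; rewrite !rho_refl; split; auto).
  pose proof (Hub 0 E0) as H0.
  destruct (Lub_Rbar E) as [m| |]; simpl in Hle, H0; try contradiction.
  exists m. split; [split; [exact H0|]|].
  - destruct Hle as [Hlt|Heq]; [exact Hlt|]. subst. contradiction.
  - intros x y Hxy. apply (Hub (rho (f x) (f y))). exists x, y. auto.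
Qed.

Lemma om_above_at_nnrat s m : 0 <= m < om s -> 0 <= s ->
  exists n, nnrat n <= s /\ m < om (nnrat n).
Proof.
  intros Hm Hs.
  assert (Hs0 : 0 < s) by (destruct Hs as [|<-]; [auto|rewrite om_0 in Hm; lra]).
  destruct om_admissible as [_ [_ [Hcont _]]].
  destruct (Hcont s Hs (om s - m) ltac:(lra)) as [dl [Hdl Hom]].
  destruct (nnrat_dense (Rmax 0 (s - dl)) s) as [n [Hn1 Hn2]].
  { split; [apply Rmax_l|]. apply Rmax_lub_lt; lra. }
  pose proof (Rmax_l 0 (s - dl)). pose proof (Rmax_r 0 (s - dl)).
  exists n. split; [lra|].
  specialize (Hom (nnrat n) ltac:(lra) ltac:(rewrite Rabs_left; lra)).
  apply Rabs_def2 in Hom. lra.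
Qed.

Lemma modulus_generic (x0 : X) :
  meagreC rho om x0
    (fun f => in_Comega rho om f /\ exists s, 0 <= s /\ modulus rho f s <> Finite (om s)).
Proof.
  split; [intros f [Hf _]; exact Hf|].
  exists (fun n => level_set (nnrat (fst (Cantor.of_nat n))) (nnrat (snd (Cantor.of_nat n)))).
  split; [intros n; apply level_set_nowhere_dense; apply nnrat_ge0|].
  intros f [Hf [s [Hs Hne]]].
  destruct (modulus_defect x0 f s Hf Hs Hne) as [m [Hm Hfm]].
  destruct (om_above_at_nnrat s m Hm Hs) as [i [His Hmi]].
  destruct (nnrat_dense m (om (nnrat i))) as [j [Hmj Hji]]; [lra|].
  exists (Cantor.to_nat (i, j)). rewrite Cantor.cancel_of_to. simpl fst; simpl snd.
  split; [exact Hji|split; [exact Hf|]].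
  intros x y Hxy. pose proof (Hfm x y ltac:(lra)). lra.
Qed.

End Genericity.

Theorem theorem3p3 (X : Type) (rho : X -> X -> R) (G : X -> X -> R -> X)
    (om : R -> R) (x0 : X) :
  is_metric rho -> complete_metric rho -> unbounded_metric rho ->
  coherent_geodesics rho G -> hyperbolic rho G ->
  admissible_modulus om ->
  exists M : (X -> X) -> Prop,
    meagreC rho om x0 M /\
    forall f, in_Comega rho om f -> ~ M f ->
      forall s, 0 <= s -> modulus rho f s = Finite (om s).
Proof.
  intros Hm _ Hu Hg Hh Ho.
  exists (fun f => in_Comega rho om f /\ exists s, 0 <= s /\ modulus rho f s <> Finite (om s)).
  split; [exact (modulus_generic rho G om Hm Hg Hh Ho Hu x0)|].
  intros f Hf HnM s Hs. apply NNPP. intros Hne. apply HnM. split; [exact Hf|]. exists s; auto.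
Qed.
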